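(* Let $\mathcal C$ be a Clifford circuit on $n$ qubits with $m$ Pauli measurements. The set $\mathcal O(\mathcal C)\subseteq\mathbb Z_2^m$ of all outcome bit-strings that occur with nonzero probability for some input state of the circuit is an affine subspace of $\mathbb Z_2^m$. Moreover, $\mathcal O(\mathcal C)$ is exactly the set of $o\in\mathbb Z_2^m$ satisfying all the affine equations in the list $R$ returned by the Outcome-Code Algorithm described in the context.
   Context: A Clifford circuit $\mathcal C$ on $n$ qubits is a finite sequence $(C_1,\dots,C_s)$ of operations, each either a unitary Clifford gate or the measurement of a Hermitian $n$-qubit Pauli operator. Each $C_i$ has a level $\mathrm{level}(C_i)\in\{1,2,\dots\}$; operations of equal level have disjoint supports and $i\le j$ implies $\mathrm{level}(C_i)\le\mathrm{level}(C_j)$. No constraint is placed on the input state. The circuit has $m$ measurements; listed in circuit order, the $j$-th one measures the operator $S_j$. An execution produces an outcome bit-string $o\in\mathbb Z_2^m$, with $o_j=0$ if the measurement of $S_j$ yields eigenvalue $+1$ and $o_j=1$ if it yields $-1$. Outcome-Code Algorithm. Maintain a list $\mathcal S$ of pairs $(T,K_T)$ where $T$ is a Hermitian $n$-qubit Pauli operator with sign $\pm1$ and $K_T\subseteq\{1,\dots,m\}$, initially empty, and a list $R$ of affine equations in $o_1,\dots,o_m$, initially empty. Process $C_1,\dots,C_s$ in order. If $C_i$ is a unitary $U$, replace each $T$ by $UTU^{-1}$ (keeping $K_T$). If $C_i$ is the measurement of $S_j$: (a) if $S_j$ or $-S_j$ lies in the group $\langle\mathcal S\rangle$ generated by the operators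 $T$ in $\mathcal S$, write $\epsilon S_j=\prod_{T\in\mathcal T}T$ with $\mathcal T\subseteq\mathcal S$ and $\epsilon\in\{\pm1\}$, let $K_j$ be the symmetric difference of the sets $K_T$, $T\in\mathcal T$, and add to $R$ the equation $o_j+\sum_{k\in K_j}o_k=0$ if $\epsilon=+1$, respectively $o_j+\sum_{k\in K_j}o_k=1$ if $\epsilon=-1$; (b) otherwise, if some $T\in\mathcal S$ anticommutes with $S_j$, replace every other $T'\in\mathcal S$ that anticommutes with $S_j$ by $(TT',K_T\triangle K_{T'})$ and then remove $(T,K_T)$ from $\mathcal S$; finally (in case (b)) add $(S_j,\{j\})$ to $\mathcal S$. Return $R$. *)

From HB Require Import structures.
From mathcomp Require Import all_boot all_order all_algebra.
From Stdlib Require Lists.List.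
Set Implicit Arguments. Unset Strict Implicit. Unset Printing Implicit Defensive.
Import Order.TTheory GRing.Theory Num.Theory.
Local Open Scope ring_scope.

(* Hermitian n-qubit Pauli operators with sign +-1.                    *)
(* A single-qubit letter is encoded by (x,z) : bool * bool:            *)
(*   (false,false) = I, (true,false) = X, (true,true) = Y,             *)
(*   (false,true) = Z.                                                 *)
(* A signed Pauli is (s, w): s = true means the sign -1.               *)
Definition letter := (bool * bool)%type.
Definition pauli (n : nat) := (bool * {ffun 'I_n -> letter})%type.

Section Matrices.
Variable C : numClosedFieldType.
Variable n : nat.

(* bit j of the computational basis index r (qubit j). *)
Definition bit (j : nat) (r : nat) : bool := odd (r %/ 2 ^ j).

Definition letter_entry (l : letter) (a b : bool) : C :=
  match l with
  | (false, false) => if a == b then 1 else 0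
  | (true, false)  => if a != b then 1 else 0
  | (true, true)   => if a != b then (if a then 'i else - 'i) else 0
  | (false, true)  => if a == b then (if a then -1 else 1) else 0
  end.

Definition pmx (p : pauli n) : 'M[C]_(2 ^ n) :=
  \matrix_(r, c) ((if p.1 then -1 else 1) *
                  \prod_(j < n) letter_entry (p.2 j) (bit j r) (bit j c)).

Definition adjoint (U : 'M[C]_(2 ^ n)) : 'M[C]_(2 ^ n) :=
  (map_mx Num.conj U)^T.

Definition unitary (U : 'M[C]_(2 ^ n)) : Prop := U *m adjoint U = 1%:M.

Definition clifford (U : 'M[C]_(2 ^ n)) : Prop :=
  unitary U /\ forall P : pauli n, exists Q : pauli n,
      U *m pmx P *m adjoint U = pmx Q.

Inductive op := Gate of 'M[C]_(2 ^ n) | Meas of pauli n.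

Definition circuit := seq op.

Definition valid_circuit (c : circuit) : Prop :=
  forall U, Stdlib.Lists.List.In (Gate U) c -> clifford U.

Definition is_meas (x : op) : bool := if x is Meas _ then true else false.

Definition nmeas (c : circuit) : nat := count is_meas c.

(* outcome bit j (0-based, in circuit order) of o *)
Definition ob (m : nat) (o : 'rV['F_2]_m) (j : nat) : 'F_2 :=
  if (insub j : option 'I_m) is Some k then o 0 k else 0.

Definition sgnF (b : 'F_2) : C := if b == 0 then 1 else -1.

Definition proj (b : 'F_2) (P : pauli n) : 'M[C]_(2 ^ n) :=
  2%:R^-1 *: (1%:M + sgnF b *: pmx P).

(* unnormalized post-measurement state after running the circuit,
   conditioned on the outcome string o; j counts measurements seen *)
Fixpoint run_aux (m : nat) (o : 'rV['F_2]_m) (j : nat) (c : circuit)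
    (psi : 'cV[C]_(2 ^ n)) : 'cV[C]_(2 ^ n) :=
  match c with
  | [::] => psi
  | Gate U :: c' => run_aux o j c' (U *m psi)
  | Meas P :: c' => run_aux o j.+1 c' (proj (ob o j) P *m psi)
  end.

Definition sqnorm (v : 'cV[C]_(2 ^ n)) : C := \sum_i `|v i 0| ^+ 2.

Definition prob (c : circuit) (o : 'rV['F_2]_(nmeas c)) (psi : 'cV[C]_(2 ^ n)) : C :=
  sqnorm (run_aux o 0 c psi).

Definition possible (c : circuit) (o : 'rV['F_2]_(nmeas c)) : Prop :=
  exists psi : 'cV[C]_(2 ^ n), sqnorm psi = 1 /\ prob (c:=c) o psi != 0.

(* The Outcome-Code Algorithm (as a relation, covering the choices     *)
(* of T and of the subset in the algorithm)                            *)
Section Algo.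
Variable m : nat.

Definition entry := ('M[C]_(2 ^ n) * {set 'I_m})%type.
(* equation (j, K, c) : o_j + sum_{k in K} o_k = c *)
Definition equation := (nat * {set 'I_m} * 'F_2)%type.

Inductive in_gen (L : seq 'M[C]_(2 ^ n)) : 'M[C]_(2 ^ n) -> Prop :=
| gen_one : in_gen L 1%:M
| gen_elt T : T \in L -> in_gen L T
| gen_mul A B : in_gen L A -> in_gen L B -> in_gen L (A *m B)
| gen_inv A : in_gen L A -> in_gen L (invmx A).

Definition anticomm (A B : 'M[C]_(2 ^ n)) : Prop := A *m B = - (B *m A).

Definition symdiff (A B : {set 'I_m}) : {set 'I_m} := (A :\: B) :|: (B :\: A).

Definition mprod (s : seq entry) : 'M[C]_(2 ^ n) :=
  foldr (fun e acc => e.1 *m acc) 1%:M s.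

Definition ksum (s : seq entry) : {set 'I_m} :=
  foldr (fun e acc => symdiff e.2 acc) set0 s.

Definition rem_at (i : nat) (s : seq entry) : seq entry :=
  take i s ++ drop i.+1 s.

Definition singl (j : nat) : {set 'I_m} := [set k : 'I_m | val k == j].

Definition state := (seq entry * seq equation * nat)%type.

Inductive step : op -> state -> state -> Prop :=
| step_gate U (S : seq entry) (R : seq equation) (j : nat) :
    step (Gate U) (S, R, j)
         ([seq (U *m e.1 *m invmx U, e.2) | e <- S], R, j)
| step_dep P (S : seq entry) (R : seq equation) (j : nat) (b : bitseq) (eps : 'F_2) :
    (in_gen (map fst S) (pmx P) \/ in_gen (map fst S) (- pmx P)) ->
    size b = size S ->
    (if eps == 1 then - pmx P else pmx P) = mprod (mask b S) ->
    step (Meas P) (S, R, j) (S, rcons R (j, ksum (mask b S), eps), j.+1)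
| step_anti P (S : seq entry) (R : seq equation) (j : nat) (i : nat) :
    ~ (in_gen (map fst S) (pmx P) \/ in_gen (map fst S) (- pmx P)) ->
    (i < size S)%N ->
    anticomm (nth (1%:M, set0) S i).1 (pmx P) ->
    step (Meas P) (S, R, j)
      (rcons [seq (if e.1 *m pmx P == - (pmx P *m e.1)
                   then ((nth (1%:M, set0) S i).1 *m e.1,
                         symdiff (nth (1%:M, set0) S i).2 e.2)
                   else e) | e <- rem_at i S]
             (pmx P, singl j), R, j.+1)
| step_free P (S : seq entry) (R : seq equation) (j : nat) :
    ~ (in_gen (map fst S) (pmx P) \/ in_gen (map fst S) (- pmx P)) ->
    (forall e, Stdlib.Lists.List.In e S -> ~ anticomm e.1 (pmx P)) ->
    step (Meas P) (S, R, j) (rcons S (pmx P, singl j), R, j.+1).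

Inductive run_alg : circuit -> state -> state -> Prop :=
| run_nil s : run_alg [::] s s
| run_cons x c s1 s2 s3 : step x s1 s2 -> run_alg c s2 s3 -> run_alg (x :: c) s1 s3.

Definition OCA (c : circuit) (R : seq equation) : Prop :=
  exists S j, run_alg c ([::], [::], 0%N) (S, R, j).

Definition satisfies (R : seq equation) (o : 'rV['F_2]_m) : Prop :=
  forall e, e \in R -> ob o e.1.1 + \sum_(k in e.1.2) o 0 k = e.2.

End Algo.
End Matrices.

(* Run the Outcome-Code Algorithm alongside the circuit.  For an outcome string
   o, let F_o be the product of the gates and of the outcome projectors met so
   far, and sign each entry (T, K) of the algorithm by (-1)^(sum_(k in K) o_k).
   The signed entries are commuting Pauli involutions with code projector
   Pi_o = prod_T (1 + sign T) / 2, and every step of the algorithm preserves: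
   each signed entry fixes F_o; F_o <> 0 forces the equations R; if o satisfies
   R then Pi_o = F_o B for some B; and tr Pi_o = 2^(n - |S|).  The trace count
   rests on non-scalar Pauli operators being traceless: a new independent
   generator halves the trace, while exchanging an anticommuting generator T
   for the measured P keeps it, since (1 + P)/2 (1 + T)/2 (1 + P)/2 = (1 + P)/4.
   So o is possible iff F_o <> 0 iff o satisfies R.  The solutions of R form an
   affine subspace, nonempty because the two outcome projectors of each
   measurement sum to the identity. *)

From HB Require Import structures.
From mathcomp Require Import all_boot all_order all_algebra.
From Stdlib Require Import Classical.
Set Implicit Arguments. Unset Strict Implicit. Unset Printing Implicit Defensive.
Import GRing.Theory Num.Theory.
Local Open Scope ring_scope.

Lemma bitS j k : bit j.+1 k = bit j k./2.
Proof. by rewrite /bit expnS divnMA divn2. Qed.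

Lemma bit0 k : bit 0 k = odd k.
Proof. by rewrite /bit expn0 divn1. Qed.

Lemma eq_from_bits n r c : (r < 2 ^ n)%N -> (c < 2 ^ n)%N ->
  (forall j, (j < n)%N -> bit j r = bit j c) -> r = c.
Proof.
elim: n r c => [|n IH] r c; first by rewrite expn0 !ltnS !leqn0 => /eqP -> /eqP ->.
move=> lt_r lt_c eq_bits.
have lt_half k : (k < 2 ^ n.+1)%N -> (k./2 < 2 ^ n)%N.
  by rewrite -divn2 ltn_divLR // muln2 -mul2n -expnS.
have eq_half : r./2 = c./2.
  by apply: IH => [||j lt_jn]; rewrite ?lt_half // -!bitS eq_bits.
have := eq_bits 0%N isT; rewrite !bit0 => eq_odd.
by rewrite -(odd_double_half r) -(odd_double_half c) eq_odd eq_half.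
Qed.

Lemma sum_nat_double (V : nmodType) N (F : nat -> V) :
  \sum_(0 <= k < N.*2) F k = \sum_(0 <= k < N) (F k.*2 + F k.*2.+1).
Proof.
elim: N => [|N IH]; first by rewrite !big_geq.
by rewrite doubleS !big_nat_recr //= IH addrA.
Qed.

Lemma sum_prod_bits (R : comRingType) n (f : 'I_n -> bool -> R) :
  \sum_(k < 2 ^ n) \prod_(j < n) f j (bit j k) = \prod_(j < n) (f j false + f j true).
Proof.
elim: n f => [|n IH] f; first by rewrite expn0 big_ord1 !big_ord0.
rewrite big_ord_recl -(IH (fun j => f (lift ord0 j))) mulr_sumr.
rewrite -(big_mkord xpredT (fun k => \prod_(j < n.+1) f j (bit j k))).
rewrite expnS mul2n sum_nat_double big_mkord; apply: eq_bigr => k _.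
rewrite !big_ord_recl /= !bit0 odd_double /= odd_double mulrDl.
by congr (_ * _ + _ * _); apply: eq_bigr => j _;
  rewrite /bump add1n bitS /= ?doubleK ?uphalf_double.
Qed.

Section Letters.
Variable C : numClosedFieldType.

Definition letter_mul (a b : letter) : letter := (a.1 (+) b.1, a.2 (+) b.2).

Definition letter_phase (a b : letter) : C :=
  match a, b with
  | (true, false), (true, true) | (true, true), (false, true)
  | (false, true), (true, false) => 'i
  | (true, true), (true, false) | (false, true), (true, true)
  | (true, false), (false, true) => - 'i
  | _, _ => 1
  end.

Definition letter_comm_sign (a b : letter) : C :=
  if [|| a == (false, false), b == (false, false) | a == b] then 1 else -1.

Definition letter_prod (a b : letter) (x y : bool) : C :=
  letter_entry C a x false * letter_entry C b false y +
  letter_entry C a x true * letter_entry C b true y.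

Lemma letter_prodE a b x y :
  letter_prod a b x y = letter_phase a b * letter_entry C (letter_mul a b) x y.
Proof.
case: a => [[] []]; case: b => [[] []]; case: x; case: y;
by rewrite /letter_prod /= ?(mulr0, mul0r, mulr1, mul1r, addr0, add0r, mulrN, mulNr, opprK, mulCii).
Qed.

Lemma letter_prodC a b x y : letter_prod a b x y = letter_comm_sign a b * letter_prod b a x y.
Proof.
case: a => [[] []]; case: b => [[] []]; case: x; case: y;
by rewrite /letter_prod /=
  ?(mulr0, mul0r, mulr1, mul1r, addr0, add0r, oppr0, mulrN, mulNr, opprK, mulCii).
Qed.

Lemma letter_prod_self a x y : letter_prod a a x y = (x == y)%:R.
Proof.
case: a => [[] []]; case: x; case: y;
by rewrite /letter_prod /= ?(mulr0, mul0r, mulr1, mul1r, addr0, add0r, mulrN, mulNr, opprK, mulCii).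
Qed.

End Letters.

Section PauliMatrices.
Variables (C : numClosedFieldType) (n : nat).
Notation MX := 'M[C]_(2 ^ n).

Definition psign (s : bool) : C := if s then -1 else 1.

Definition pmul (p q : pauli n) : pauli n :=
  (false, [ffun j => letter_mul (p.2 j) (q.2 j)]).

Lemma prod_eq_bits (r c : 'I_(2 ^ n)) :
  \prod_(j < n) ((bit j r == bit j c)%:R : C) = (r == c)%:R.
Proof.
have [<-|neq_rc] := eqVneq r c; first by rewrite big1 // => j _; rewrite eqxx.
have [j neq_bit] : exists j : 'I_n, bit j r != bit j c.
  apply/existsP; apply: contraNT neq_rc; rewrite negb_exists => /forallP eq_bits.
  apply/eqP/val_inj/(@eq_from_bits n); rewrite ?ltn_ord // => j lt_jn.
  by have := eq_bits (Ordinal lt_jn); rewrite negbK => /eqP.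
by rewrite (bigD1 j) //= (negbTE neq_bit) mul0r.
Qed.

Lemma pmx_mulE (p q : pauli n) r c :
  (pmx C p *m pmx C q) r c =
  psign p.1 * psign q.1 * \prod_(j < n) letter_prod C (p.2 j) (q.2 j) (bit j r) (bit j c).
Proof.
rewrite !mxE -(sum_prod_bits (fun j b =>
  letter_entry C (p.2 j) (bit j r) b * letter_entry C (q.2 j) b (bit j c))) mulr_sumr.
apply: eq_bigr => k _; rewrite !mxE big_split /= /psign.
by rewrite -!mulrA; congr (_ * _); rewrite mulrCA.
Qed.

Lemma pmx_mul (p q : pauli n) :
  pmx C p *m pmx C q =
  (psign p.1 * psign q.1 * \prod_(j < n) letter_phase C (p.2 j) (q.2 j)) *: pmx C (pmul p q).
Proof.
apply/matrixP => r c; rewrite pmx_mulE !mxE /= mul1r.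
under eq_bigr do rewrite letter_prodE.
by rewrite big_split /= mulrA; congr (_ * _); apply: eq_bigr => j _; rewrite ffunE.
Qed.

Lemma pmx_comm_or_anti (p q : pauli n) :
  pmx C p *m pmx C q = pmx C q *m pmx C p \/
  pmx C p *m pmx C q = - (pmx C q *m pmx C p).
Proof.
set s := \prod_(j < n) letter_comm_sign C (p.2 j) (q.2 j).
have pqE : pmx C p *m pmx C q = s *: (pmx C q *m pmx C p).
  apply/matrixP => r c; rewrite [RHS]mxE !pmx_mulE.
  under eq_bigr do rewrite letter_prodC.
  by rewrite big_split /= mulrCA [psign q.1 * _]mulrC.
have : s = 1 \/ s = -1.
  apply: (big_ind (fun x : C => x = 1 \/ x = -1)); first by left.
    by move=> x y [->|->] [->|->]; rewrite ?mulr1 ?mulrN1 ?opprK; auto.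
  by move=> j _; rewrite /letter_comm_sign; case: ifP; auto.
by case=> sE; [left | right]; rewrite pqE sE ?scale1r ?scaleN1r.
Qed.

Lemma pmx_mul_self (p : pauli n) : pmx C p *m pmx C p = 1%:M.
Proof.
apply/matrixP => r c; rewrite pmx_mulE.
under eq_bigr do rewrite letter_prod_self.
by rewrite prod_eq_bits mxE /psign; case: ifP => _; rewrite ?mulrNN !mul1r.
Qed.

Definition pauli_trivial (p : pauli n) := [forall j, p.2 j == (false, false)].

Lemma pmx_trivial (p : pauli n) : pauli_trivial p -> pmx C p = (psign p.1)%:M.
Proof.
move=> /forallP triv_p; apply/matrixP => r c; rewrite !mxE.
have -> : \prod_(j < n) letter_entry C (p.2 j) (bit j r) (bit j c) =
          \prod_(j < n) ((bit j r == bit j c)%:R : C).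
  by apply: eq_bigr => j _; rewrite (eqP (triv_p j)) /=; case: eqP.
by rewrite prod_eq_bits /psign mulr_natr.
Qed.

Lemma mxtrace_pmx (p : pauli n) : ~~ pauli_trivial p -> \tr (pmx C p) = 0.
Proof.
rewrite negb_forall => /existsP [j ntriv_j].
rewrite /mxtrace; under eq_bigr do rewrite mxE.
rewrite -mulr_sumr (sum_prod_bits (fun j b => letter_entry C (p.2 j) b b)) (bigD1 j) //=.
by move: ntriv_j; case: (p.2 j) => [[] []] //= _; rewrite ?(addr0, subrr, mul0r, mulr0).
Qed.

Definition scaled_pauli (M : MX) := exists (l : C) (p : pauli n), M = l *: pmx C p.

Lemma scaled_pauli_pmx p : scaled_pauli (pmx C p).
Proof. by exists 1, p; rewrite scale1r. Qed.

Lemma scaled_pauli_mul A B : scaled_pauli A -> scaled_pauli B -> scaled_pauli (A *m B).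
Proof.
move=> [l [p ->]] [l' [q ->]].
by rewrite -scalemxAl -scalemxAr pmx_mul !scalerA; eexists; exists (pmul p q).
Qed.

Lemma mxtrace_scaled_pauli A :
  scaled_pauli A -> (forall mu, A != mu%:M) -> \tr A = 0.
Proof.
move=> [l [p ->]] nscalar.
have [triv_p|ntriv_p] := boolP (pauli_trivial p); last by rewrite mxtraceZ mxtrace_pmx ?mulr0.
by move: (nscalar (l * psign p.1)); rewrite pmx_trivial // scale_scalar_mx eqxx.
Qed.

Lemma scaled_pauli_comm_or_anti A B : scaled_pauli A -> scaled_pauli B ->
  A *m B = B *m A \/ A *m B = - (B *m A).
Proof.
move=> [l [p ->]] [l' [q ->]].
rewrite -!scalemxAl -!scalemxAr !scalerA [l' * l]mulrC.
by case: (pmx_comm_or_anti p q) => ->; [left | right; rewrite scalerN].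
Qed.

End PauliMatrices.

Lemma invmx_invol (R : comUnitRingType) k (A : 'M[R]_k) : A *m A = 1%:M -> invmx A = A.
Proof.
move=> sq_A; have [unit_A _] := mulmx1_unit sq_A.
by rewrite -[invmx A]mulmx1 -sq_A mulmxA mulVmx // mul1mx.
Qed.

Lemma scalar_mx_inj (R : nzRingType) k (a b : R) :
  (0 < k)%N -> a%:M = b%:M :> 'M_k -> a = b.
Proof.
by move=> k_gt0 /matrixP /(_ (Ordinal k_gt0) (Ordinal k_gt0)); rewrite !mxE eqxx !mulr1n.
Qed.

Section MatrixIdentities.
Variables (R : numFieldType) (k : nat).
Implicit Types X Y Z T : 'M[R]_k.

Lemma mxtrace_anticomm X Y Z : X *m Y = - (Y *m X) -> Y *m Z = Z *m Y ->
  Y *m Y = 1%:M -> \tr (X *m Z) = 0.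
Proof.
move=> anti_XY comm_YZ sq_Y.
have : \tr (Y *m X *m Y *m Z) = \tr (X *m Z).
  by rewrite -!mulmxA mxtrace_mulC -!mulmxA -comm_YZ (mulmxA Y Y Z) sq_Y mul1mx.
have -> : Y *m X = - (X *m Y) by rewrite anti_XY opprK.
rewrite !mulNmx raddfN -!mulmxA (mulmxA Y Y Z) sq_Y mul1mx => /eqP.
by rewrite -subr_eq0 -opprD oppr_eq0 -mulr2n -mulr_natr mulf_eq0 pnatr_eq0 orbF => /eqP.
Qed.

Lemma add1_anticomm_sandwich X Y : X *m Y = - (Y *m X) -> Y *m Y = 1%:M ->
  (1%:M + Y) *m X *m (1%:M + Y) = 0.
Proof.
move=> anti_XY sq_Y.
have anti_YX : Y *m X = - (X *m Y) by rewrite anti_XY opprK.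
rewrite !mulmxDl !mulmxDr !mul1mx !mulmx1 anti_YX mulNmx -mulmxA sq_Y mulmx1.
by rewrite addrA addrK subrr.
Qed.

Definition plus_proj X := 2%:R^-1 *: (1%:M + X).

Lemma plus_proj_idem X : X *m X = 1%:M -> plus_proj X *m plus_proj X = plus_proj X.
Proof.
move=> sq_X.
have sqE : (1%:M + X) *m (1%:M + X) = 2%:R *: (1%:M + X).
  rewrite mulmxDl !mulmxDr !mul1mx mulmx1 sq_X scaler_nat mulr2n.
  by rewrite [X + _]addrC.
by rewrite -scalemxAl -scalemxAr sqE !scalerA -mulrA mulVf ?mulr1 // pnatr_eq0.
Qed.

Lemma plus_proj_anticomm_sandwich X Y : X *m Y = - (Y *m X) -> Y *m Y = 1%:M ->
  plus_proj Y *m plus_proj X *m plus_proj Y = 2%:R^-1 *: plus_proj Y.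
Proof.
move=> anti_XY sq_Y.
have sandwich : plus_proj Y *m X *m plus_proj Y = 0.
  by rewrite /plus_proj -!scalemxAl -scalemxAr add1_anticomm_sandwich ?scaler0.
move: (plus_proj_idem sq_Y) sandwich; move: (plus_proj Y) => Q idem_Q sandwich.
by rewrite /plus_proj -scalemxAr -scalemxAl mulmxDr mulmx1 mulmxDl idem_Q sandwich addr0.
Qed.

Lemma plus_proj_mul_absorb X Y : Y *m Y = 1%:M ->
  plus_proj Y *m plus_proj (Y *m X) = plus_proj Y *m plus_proj X.
Proof.
move=> sq_Y; rewrite -!scalemxAl -!scalemxAr; congr (_ *: (_ *: _)).
rewrite !mulmxDl !mulmxDr !mul1mx !mulmx1 mulmxA sq_Y mul1mx.
by rewrite -!addrA [Y + X]addrC (addrCA (Y *m X) X Y) [Y *m X + Y]addrC.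
Qed.

Lemma mxtrace_plus_proj_mul X Y Z : X *m Y = - (Y *m X) -> Y *m Z = Z *m Y ->
  Y *m Y = 1%:M -> \tr (plus_proj X *m Z) = 2%:R^-1 * \tr Z.
Proof.
move=> anti_XY comm_YZ sq_Y.
by rewrite -scalemxAl mxtraceZ mulmxDl mul1mx mxtraceD (mxtrace_anticomm anti_XY) ?addr0.
Qed.

Definition optmul (b : bool) T X := if b then T *m X else X.

Lemma optmul_comm T X Y (b b' : bool) :
  T *m X = X *m T -> T *m Y = Y *m T -> X *m Y = Y *m X ->
  optmul b T X *m optmul b' T Y = optmul b' T Y *m optmul b T X.
Proof.
move=> comm_TX comm_TY comm_XY; case: b; case: b' => //=.
- by rewrite -!mulmxA (mulmxA X T Y) (mulmxA Y T X) -comm_TX -comm_TY -!mulmxA comm_XY.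
- by rewrite -(mulmxA T X Y) comm_XY (mulmxA T Y X) comm_TY mulmxA.
- by rewrite (mulmxA X T Y) -comm_TX -(mulmxA T X Y) comm_XY mulmxA.
Qed.

Lemma optmul_sq T X (b : bool) : T *m X = X *m T -> T *m T = 1%:M ->
  X *m X = 1%:M -> optmul b T X *m optmul b T X = 1%:M.
Proof.
move=> comm_TX sq_T sq_X; case: b => //=.
by rewrite -mulmxA (mulmxA X) -comm_TX -mulmxA sq_X mulmx1 sq_T.
Qed.

End MatrixIdentities.

Section CommutingInvolutions.
Variables (C : numClosedFieldType) (n : nat).
Notation MX := 'M[C]_(2 ^ n).

Definition mxprod (L : seq MX) : MX := foldr mulmx 1%:M L.

Definition commuting_involutions (L : seq MX) :=
  {in L &, forall x y, x *m y = y *m x} /\ {in L, forall x, x *m x = 1%:M}.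

Definition bxor (b b' : bitseq) : bitseq := [seq x.1 (+) x.2 | x <- zip b b'].

Lemma mxprod_comm x L : {in L, forall y, x *m y = y *m x} ->
  x *m mxprod L = mxprod L *m x.
Proof.
elim: L => [|y L IH] comm_x /=; first by rewrite mulmx1 mul1mx.
rewrite mulmxA comm_x ?mem_head // -!mulmxA IH // => z z_L.
by apply: comm_x; rewrite inE z_L orbT.
Qed.

Section Cons.
Variables (x : MX) (L : seq MX).
Hypothesis invol_xL : commuting_involutions (x :: L).

Lemma commuting_involutions_behead : commuting_involutions L.
Proof.
by case: invol_xL => comm sq; split => [y z y_L z_L|y y_L];
  [apply: comm | apply: sq]; rewrite inE ?y_L ?z_L orbT.
Qed.

Lemma commuting_involutions_head_mask b :
  x *m mxprod (mask b L) = mxprod (mask b L) *m x.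
Proof.
apply: mxprod_comm => y /mem_mask y_L.
by apply: invol_xL.1; rewrite inE ?eqxx ?y_L ?orbT.
Qed.

Lemma commuting_involutions_head_sq : x *m x = 1%:M.
Proof. by apply: invol_xL.2; rewrite mem_head. Qed.

End Cons.

Lemma mxprod_mask_mul L b b' : commuting_involutions L ->
  size b = size L -> size b' = size L ->
  mxprod (mask b L) *m mxprod (mask b' L) = mxprod (mask (bxor b b') L).
Proof.
elim: L b b' => [|x L IH] [|u b] [|v b'] //=; first by rewrite mulmx1.
move=> invol_xL [] size_b [] size_b'.
have comm_x := commuting_involutions_head_mask invol_xL.
have sq_x := commuting_involutions_head_sq invol_xL.
have invol_L := commuting_involutions_behead invol_xL.
rewrite /bxor /= -/(bxor b b').
case: u; case: v => /=; rewrite -IH //.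
- by rewrite -mulmxA (mulmxA (mxprod _)) -comm_x !mulmxA sq_x mul1mx.
- by rewrite !mulmxA.
- by rewrite !mulmxA comm_x.
Qed.

Lemma mxprod_mask_sq L b : commuting_involutions L ->
  mxprod (mask b L) *m mxprod (mask b L) = 1%:M.
Proof.
elim: L b => [|x L IH] [|u b] //= invol_xL; rewrite ?mulmx1 //.
have IHL := IH b (commuting_involutions_behead invol_xL).
case: u => //=.
rewrite -mulmxA (mulmxA (mxprod _)) -(commuting_involutions_head_mask invol_xL).
by rewrite !mulmxA (commuting_involutions_head_sq invol_xL) mul1mx IHL.
Qed.

Lemma in_gen_mask (L : seq MX) g : commuting_involutions L -> in_gen L g ->
  exists2 b, size b = size L & g = mxprod (mask b L).
Proof.
move=> invol_L; elim=> [|T T_L|A B _ [b size_b ->] _ [b' size_b' ->]|A _ [b size_b ->]].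
- by exists (nseq (size L) false); rewrite ?size_nseq ?mask_false.
- elim: L invol_L T_L => [|x L IH] // invol_xL.
  rewrite inE; have [-> _|_ /= T_L] := eqVneq T x.
    by exists (true :: nseq (size L) false); rewrite /= ?size_nseq ?mask_false /= ?mulmx1.
  have [b size_b ->] := IH (commuting_involutions_behead invol_xL) T_L.
  by exists (false :: b); rewrite /= ?size_b.
- exists (bxor b b'); last by rewrite mxprod_mask_mul.
  by rewrite /bxor size_map size_zip size_b size_b' minnn.
- by exists b; rewrite // invmx_invol // mxprod_mask_sq.
Qed.

Lemma in_gen_cons (x : MX) L g : in_gen L g -> in_gen (x :: L) g.
Proof.
elim=> [|T T_L|A B _ genA _ genB|A _ genA].
- exact: gen_one.
- by apply: gen_elt; rewrite inE T_L orbT.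
- exact: gen_mul.
- exact: gen_inv.
Qed.

Lemma mxprod_mask_in_gen (L : seq MX) b : in_gen L (mxprod (mask b L)).
Proof.
elim: L b => [|x L IH] [|[] b] /=; try exact: gen_one; try exact: in_gen_cons.
by apply: gen_mul; [apply: gen_elt; rewrite mem_head | exact: in_gen_cons].
Qed.

(* If [P * g] were a scalar [l] for a product [g] of generators, then [l = +-1]
   because both [P] and [g] square to 1, and [P = +-g] would be generated. *)
Lemma notin_gen_mul_nonscalar L (P : MX) :
  commuting_involutions L -> P *m P = 1%:M ->
  ~ (in_gen L P \/ in_gen L (- P)) ->
  forall b (l : C), P *m mxprod (mask b L) != l%:M.
Proof.
move=> invol_L sq_P notin_gen b l; apply/eqP => Pg_scalar.
set g := mxprod (mask b L) in Pg_scalar.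
have sq_g : g *m g = 1%:M by exact: mxprod_mask_sq.
have PE : P = l *: g by rewrite -[P]mulmx1 -sq_g mulmxA Pg_scalar mul_scalar_mx.
have : l ^+ 2 = 1.
  apply: (scalar_mx_inj (k := 2 ^ n)); first by rewrite expn_gt0.
  rewrite -sq_P PE -scalemxAl -scalemxAr sq_g scalerA expr2.
  by rewrite scalemx1.
move/eqP; rewrite sqrf_eq1 => /orP [] /eqP lE; apply: notin_gen.
- by left; rewrite PE lE scale1r; exact: mxprod_mask_in_gen.
- by right; rewrite PE lE scaleN1r opprK; exact: mxprod_mask_in_gen.
Qed.

End CommutingInvolutions.


Lemma F2_cases (a : 'F_2) : a = 0 \/ a = 1.
Proof. by case: a => [[|[|k]] lt_k2]; [left | right | by []]; exact: val_inj. Qed.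

Lemma F2_addxx (a : 'F_2) : a + a = 0.
Proof. by case: (F2_cases a) => ->; [rewrite addr0 | exact: val_inj]. Qed.

Lemma F2_addr_eq0 (a b : 'F_2) : (a + b == 0) = (a == b).
Proof.
apply/eqP/eqP => [abE|->]; last exact: F2_addxx.
by rewrite -[a]addr0 -(F2_addxx b) addrA abE add0r.
Qed.

Section Signs.
Variable C : numClosedFieldType.

Lemma sgnFD (a b : 'F_2) : sgnF C (a + b) = sgnF C a * sgnF C b.
Proof.
case: (F2_cases a) => ->; case: (F2_cases b) => ->;
by rewrite /sgnF ?addr0 ?add0r ?F2_addxx /= ?mulr1 ?mul1r ?mulrNN ?mulr1.
Qed.

Lemma sgnF_mulss (a : 'F_2) : sgnF C a * sgnF C a = 1.
Proof. by rewrite -sgnFD F2_addxx /sgnF eqxx. Qed.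

Lemma half_add1_sgnF (a : 'F_2) : 2%:R^-1 * (1 + sgnF C a) = if a == 0 then 1 else 0.
Proof.
rewrite /sgnF; case: eqP => _; last by rewrite subrr mulr0.
by rewrite mulVf // pnatr_eq0.
Qed.

End Signs.

Section CodeProjector.
Variables (C : numClosedFieldType) (n m : nat).
Notation MX := 'M[C]_(2 ^ n).
Notation ent := (entry C n m).
Notation RV := 'rV['F_2]_m.
Implicit Types (o : RV) (e : ent) (S : seq ent).

(* For outcomes [o], the entry [(T, K)] of the algorithm stands for the signed
   stabilizer [(-1)^(sum_(k in K) o_k) T]. *)
Definition parity o (K : {set 'I_m}) : 'F_2 := \sum_(k in K) o 0 k.
Definition signed_gen o e : MX := sgnF C (parity o e.2) *: e.1.
Definition gen_proj o e : MX := plus_proj (signed_gen o e).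
Definition code_proj o S : MX := foldr (fun e acc => gen_proj o e *m acc) 1%:M S.

Definition stabilizer_family S :=
  {in S, forall e, scaled_pauli e.1} /\ commuting_involutions (map fst S).

Lemma parity_symdiff o A B : parity o (symdiff A B) = parity o A + parity o B.
Proof.
rewrite /parity !(big_mkcond (fun k => k \in _)) -big_split /=.
apply: eq_bigr => k _; rewrite /symdiff !inE.
by case: (k \in A); case: (k \in B); rewrite /= ?add0r ?addr0 ?F2_addxx.
Qed.

Lemma parity_singl o j : parity o (singl m j) = ob o j.
Proof.
rewrite /parity /ob; case: insubP => [k _ kE|out_j].
  by rewrite (big_pred1 k) // => i; rewrite /singl inE -kE.
rewrite big_pred0 // => i; rewrite /singl inE; apply/negbTE; apply/eqP => iE.
by move: out_j; rewrite -iE ltn_ord.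
Qed.

Lemma parity_set0 o : parity o set0 = 0.
Proof. by rewrite /parity big_pred0 // => i; rewrite inE. Qed.

Lemma signed_gen_mul o e f :
  signed_gen o (e.1 *m f.1, symdiff e.2 f.2) = signed_gen o e *m signed_gen o f.
Proof. by rewrite /signed_gen /= parity_symdiff sgnFD -scalemxAl -scalemxAr scalerA. Qed.

Lemma signed_gen_sq o e : e.1 *m e.1 = 1%:M -> signed_gen o e *m signed_gen o e = 1%:M.
Proof.
by move=> sq_e; rewrite /signed_gen -scalemxAl -scalemxAr sq_e scalerA sgnF_mulss scale1r.
Qed.

Lemma signed_gen_proj o e : e.1 *m e.1 = 1%:M -> signed_gen o e *m gen_proj o e = gen_proj o e.
Proof.
by move=> sq_e; rewrite /gen_proj /plus_proj -scalemxAr mulmxDr mulmx1 signed_gen_sq // addrC.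
Qed.

Lemma signed_gen_comm o e X : e.1 *m X = X *m e.1 -> signed_gen o e *m X = X *m signed_gen o e.
Proof. by move=> comm_eX; rewrite /signed_gen -scalemxAl -scalemxAr comm_eX. Qed.

Lemma gen_proj_comm o e X : e.1 *m X = X *m e.1 -> gen_proj o e *m X = X *m gen_proj o e.
Proof.
move=> comm_eX; rewrite /gen_proj /plus_proj -scalemxAl -scalemxAr.
by rewrite mulmxDl mulmxDr mul1mx mulmx1 signed_gen_comm.
Qed.

Lemma code_proj_comm o S X : {in S, forall e, e.1 *m X = X *m e.1} ->
  code_proj o S *m X = X *m code_proj o S.
Proof.
elim: S => [|e S IH] comm_SX /=; first by rewrite mulmx1 mul1mx.
rewrite -mulmxA IH => [|f f_S]; last by apply: comm_SX; rewrite inE f_S orbT.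
by rewrite !mulmxA gen_proj_comm // comm_SX // mem_head.
Qed.

Lemma code_proj_rcons o S e : code_proj o (rcons S e) = code_proj o S *m gen_proj o e.
Proof. by elim: S => [|f S IH] /=; rewrite ?mulmx1 ?mul1mx // IH mulmxA. Qed.

Lemma code_proj_cat_cons o (xs ys : seq ent) e :
  {in xs, forall x, e.1 *m x.1 = x.1 *m e.1} ->
  code_proj o (xs ++ e :: ys) = gen_proj o e *m code_proj o (xs ++ ys).
Proof.
elim: xs => [|x xs IH] comm_e //=.
rewrite IH => [|y y_xs]; last by apply: comm_e; rewrite inE y_xs orbT.
have comm_ex : e.1 *m x.1 = x.1 *m e.1 by apply: comm_e; rewrite mem_head.
have comm_eQx : e.1 *m gen_proj o x = gen_proj o x *m e.1.
  by rewrite (gen_proj_comm o (esym comm_ex)).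
by rewrite !mulmxA (gen_proj_comm o comm_eQx).
Qed.

Lemma stabilizer_family_comm S e f : stabilizer_family S -> e \in S -> f \in S ->
  e.1 *m f.1 = f.1 *m e.1.
Proof. by move=> [_ [comm _]] e_S f_S; apply: comm; apply: map_f. Qed.

Lemma stabilizer_family_sq S e : stabilizer_family S -> e \in S -> e.1 *m e.1 = 1%:M.
Proof. by move=> [_ [_ sq]] e_S; apply: sq; apply: map_f. Qed.

Lemma signed_gen_code_proj o S e : stabilizer_family S -> e \in S ->
  signed_gen o e *m code_proj o S = code_proj o S.
Proof.
move=> stab_S e_S.
have comm_e f : f \in S -> e.1 *m f.1 = f.1 *m e.1 by apply: stabilizer_family_comm.
have sq_e := stabilizer_family_sq stab_S e_S.
elim: S e_S {stab_S} comm_e => [|f S IH] // e_S comm_e /=.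
move: e_S; rewrite inE => /orP [/eqP <-|e_S]; first by rewrite mulmxA signed_gen_proj.
have comm_fe : e.1 *m gen_proj o f = gen_proj o f *m e.1.
  by rewrite (gen_proj_comm o (esym (comm_e f (mem_head f S)))).
rewrite (mulmxA (signed_gen o e)) (signed_gen_comm o comm_fe) -mulmxA IH // => g g_S.
by apply: comm_e; rewrite inE g_S orbT.
Qed.

Lemma signed_gen_prod o (s : seq ent) :
  foldr (fun e acc => signed_gen o e *m acc) 1%:M s = sgnF C (parity o (ksum s)) *: mprod s.
Proof.
elim: s => [|e s IH] /=; first by rewrite parity_set0 /sgnF eqxx scale1r.
by rewrite IH /signed_gen -scalemxAl -scalemxAr scalerA parity_symdiff sgnFD.
Qed.

Lemma signed_gen_prod_fix o (s : seq ent) (X : MX) :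
  {in s, forall e, signed_gen o e *m X = X} ->
  foldr (fun e acc => signed_gen o e *m acc) 1%:M s *m X = X.
Proof.
elim: s => [|e s IH] fix_s /=; first by rewrite mul1mx.
rewrite -mulmxA IH ?fix_s ?mem_head // => f f_s.
by apply: fix_s; rewrite inE f_s orbT.
Qed.

(* Expanding the product, every term is [X] times a product of generators, a
   traceless Pauli operator as long as it is not scalar. *)
Lemma mxtrace_mul_code_proj o S (X : MX) :
  {in S, forall e, scaled_pauli e.1} -> scaled_pauli X ->
  (forall b (l : C), X *m mxprod (mask b (map fst S)) != l%:M) ->
  \tr (X *m code_proj o S) = 0.
Proof.
elim: S X => [|e S IH] X pauli_S pauli_X nscalar /=.
  rewrite mulmx1; apply: mxtrace_scaled_pauli => // l.
  by move: (nscalar [::] l); rewrite /= mulmx1.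
have pauli_S' : {in S, forall f, scaled_pauli f.1}.
  by move=> f f_S; apply: pauli_S; rewrite inE f_S orbT.
rewrite /gen_proj /plus_proj -scalemxAl -scalemxAr mxtraceZ mulmxDl mul1mx mulmxDr mxtraceD.
rewrite IH //; last by move=> b l; exact: (nscalar (false :: b) l).
rewrite mulmxA /signed_gen -scalemxAr -scalemxAl mxtraceZ IH ?mulr0 ?add0r ?mulr0 //.
  by apply: scaled_pauli_mul => //; apply: pauli_S; rewrite mem_head.
by move=> b l; move: (nscalar (true :: b) l); rewrite /= mulmxA.
Qed.

End CodeProjector.

Section Projectors.
Variables (C : numClosedFieldType) (n : nat).
Notation MX := 'M[C]_(2 ^ n).
Implicit Types (P : pauli n) (X : MX).

Lemma proj_eigen c a P X : pmx C P *m X = sgnF C a *: X ->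
  proj C c P *m X = if c + a == 0 then X else 0.
Proof.
move=> eigX; rewrite /proj -scalemxAl mulmxDl mul1mx -scalemxAl eigX scalerA -sgnFD.
rewrite -{1}[X]scale1r -scalerDl scalerA half_add1_sgnF.
by case: eqP; rewrite ?scale1r ?scale0r.
Qed.

Lemma proj_comm c P X : X *m pmx C P = pmx C P *m X -> X *m proj C c P = proj C c P *m X.
Proof.
move=> comm_XP; rewrite /proj -scalemxAr -scalemxAl mulmxDr mulmxDl mulmx1 mul1mx.
by rewrite -scalemxAr -scalemxAl comm_XP.
Qed.

Lemma signed_pmx_sq c P : (sgnF C c *: pmx C P) *m (sgnF C c *: pmx C P) = 1%:M.
Proof. by rewrite -scalemxAl -scalemxAr pmx_mul_self scalerA sgnF_mulss scale1r. Qed.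

Lemma proj_add P X : proj C 0 P *m X + proj C 1 P *m X = X.
Proof.
rewrite -mulmxDl /proj /sgnF eqxx /= -scalerDr scale1r.
rewrite scaleN1r addrACA subrr addr0 -mulr2n -scaler_nat scalerA.
by rewrite mulVf ?pnatr_eq0 // scale1r mul1mx.
Qed.

End Projectors.

Lemma InP (T : eqType) (x : T) (s : seq T) : List.In x s <-> x \in s.
Proof.
elim: s => [|y s IH] //=; rewrite inE; split.
  by move=> [->|/IH ->]; rewrite ?eqxx ?orbT.
by move=> /orP [/eqP ->|/IH]; auto.
Qed.

Lemma satisfies_rcons m (R : seq (equation m)) e o :
  satisfies (rcons R e) o <-> satisfies R o /\ ob o e.1.1 + \sum_(k in e.1.2) o 0 k = e.2.
Proof.
split => [sat_Re|[sat_R sat_e] f]; last by rewrite mem_rcons inE => /orP [/eqP ->|/sat_R].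
by split => [f f_R|]; apply: sat_Re; rewrite mem_rcons inE ?f_R ?eqxx ?orbT.
Qed.

Section Invariant.
Variables (C : numClosedFieldType) (n m : nat).
Notation MX := 'M[C]_(2 ^ n).
Notation ent := (entry C n m).
Notation RV := 'rV['F_2]_m.
Implicit Types (S : seq ent) (R : seq (equation m)) (F : RV -> MX) (P : pauli n).

(* [F o] is the operator applied by the part of the circuit processed so far
   when the measurements yield [o]. *)
Record invariant S R F : Prop := {
  inv_family : stabilizer_family S;
  inv_fix : forall o e, e \in S -> signed_gen o e *m F o = F o;
  inv_sound : forall o, F o != 0 -> satisfies R o;
  inv_complete : forall o, satisfies R o -> exists B, F o *m B = code_proj o S;
  inv_trace : forall o, \tr (code_proj o S) * 2%:R ^+ size S = (2 ^ n)%:R }.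

Lemma invariant_nil : invariant [::] [::] (fun _ => 1%:M).
Proof.
split=> // [o _|o]; first by exists 1%:M; rewrite mulmx1.
by rewrite /= mxtrace1 expr0 mulr1.
Qed.

Lemma invariant_nonzero S R F : invariant S R F -> forall o, F o != 0 <-> satisfies R o.
Proof.
move=> [_ _ sound complete trace] o; split; first exact: sound.
move=> /complete [B FBE]; apply/negP => /eqP F0; move: (trace o).
by rewrite -FBE F0 mul0mx mxtrace0 mul0r => /eqP; rewrite eq_sym pnatr_eq0 expn_eq0.
Qed.

Lemma mprod_mxprod (s : seq ent) : mprod s = mxprod (map fst s).
Proof. by elim: s => //= e s ->. Qed.

Lemma comm_or_anticomm S e P : stabilizer_family S -> e \in S ->
  ~ anticomm e.1 (pmx C P) -> e.1 *m pmx C P = pmx C P *m e.1.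
Proof.
move=> [pauli_S _] e_S.
by case: (scaled_pauli_comm_or_anti (pauli_S e e_S) (scaled_pauli_pmx C P)).
Qed.

Lemma gen_proj_pmx o j P : gen_proj o (pmx C P, singl m j) = proj C (ob o j) P.
Proof. by rewrite /gen_proj /signed_gen /= parity_singl. Qed.

Lemma signed_gen_pmx_proj o j P :
  signed_gen o (pmx C P, singl m j) *m proj C (ob o j) P = proj C (ob o j) P.
Proof. by rewrite -gen_proj_pmx signed_gen_proj //= pmx_mul_self. Qed.

Lemma clifford_invmx (U : MX) : clifford U -> U \in unitmx /\ invmx U = adjoint U.
Proof.
move=> [unitary_U _]; have [unit_U _] := mulmx1_unit unitary_U; split => //.
by rewrite -[invmx U]mulmx1 -unitary_U mulmxA mulVmx // mul1mx.
Qed.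

Lemma mulmx_conj (U A B : MX) : U \in unitmx ->
  (U *m A *m invmx U) *m (U *m B *m invmx U) = U *m (A *m B) *m invmx U.
Proof. by move=> unit_U; rewrite -!mulmxA (mulmxA (invmx U)) mulVmx // mul1mx. Qed.

Lemma invariant_gate (U : MX) S R F : clifford U -> invariant S R F ->
  invariant [seq (U *m e.1 *m invmx U, e.2) | e <- S] R (fun o => U *m F o).
Proof.
move=> cliff_U [[pauli_S [comm_S sq_S]] fixF sound complete trace].
have [unit_U invUE] := clifford_invmx cliff_U.
have conj_gen o e : signed_gen o (U *m e.1 *m invmx U, e.2) = U *m signed_gen o e *m invmx U.
  by rewrite /signed_gen /= -scalemxAr -scalemxAl.
have conj_code o T : code_proj o [seq (U *m e.1 *m invmx U, e.2) | e <- T] =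
    U *m code_proj o T *m invmx U.
  elim: T => [|e T IH] /=; first by rewrite mulmx1 mulmxV.
  rewrite IH /gen_proj conj_gen -mulmx_conj // -[in RHS]scalemxAr -[in RHS]scalemxAl.
  by rewrite [in RHS]mulmxDr [in RHS]mulmxDl [in RHS]mulmx1 mulmxV.
split.
- split; last split.
  + move=> _ /mapP [e e_S ->] /=; have [l [p ->]] := pauli_S e e_S.
    have [q pE] := cliff_U.2 p.
    by exists l, q; rewrite -scalemxAr -scalemxAl invUE pE.
  + move=> x y; rewrite -map_comp => /mapP [e e_S ->] /mapP [f f_S ->] /=.
    by rewrite !mulmx_conj // (comm_S _ _ (map_f fst e_S) (map_f fst f_S)).
  + move=> x; rewrite -map_comp => /mapP [e e_S ->] /=.
    by rewrite mulmx_conj // (sq_S _ (map_f fst e_S)) mulmx1 mulmxV.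
- move=> o _ /mapP [e e_S ->].
  by rewrite conj_gen -!mulmxA (mulmxA (invmx U)) mulVmx // mul1mx fixF.
- by move=> o UF_neq0; apply: sound; apply: contra UF_neq0 => /eqP ->; rewrite mulmx0.
- move=> o /complete [B FBE].
  by exists (B *m invmx U); rewrite conj_code mulmxA -(mulmxA U) FBE.
- by move=> o; rewrite conj_code size_map mxtrace_mulC mulmxA mulVmx // mul1mx.
Qed.

Section DependentMeasurement.
Variables (S : seq ent) (P : pauli n) (b : bitseq) (eps : 'F_2).
Hypothesis PE : (if eps == 1 then - pmx C P else pmx C P) = mprod (mask b S).

Lemma mprod_mask_signed : mprod (mask b S) = sgnF C eps *: pmx C P.
Proof. by rewrite -PE /sgnF; case: (F2_cases eps) => ->; rewrite ?scale1r ?scaleN1r. Qed.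

Lemma pmx_eigen_dependent o (X : MX) : {in mask b S, forall e, signed_gen o e *m X = X} ->
  pmx C P *m X = sgnF C (parity o (ksum (mask b S)) + eps) *: X.
Proof.
move=> /signed_gen_prod_fix; rewrite signed_gen_prod mprod_mask_signed scalerA -sgnFD.
by rewrite -scalemxAl => {2}<-; rewrite scalerA sgnF_mulss scale1r.
Qed.

Lemma invariant_dependent R F j : invariant S R F ->
  invariant S (rcons R (j, ksum (mask b S), eps)) (fun o => proj C (ob o j) P *m F o).
Proof.
move=> [stab_S fixF sound complete trace].
have comm_SP e : e \in S -> e.1 *m pmx C P = pmx C P *m e.1.
  move=> e_S; rewrite -[pmx C P]scale1r -(sgnF_mulss C eps) -scalerA -mprod_mask_signed.
  rewrite -scalemxAr -scalemxAl mprod_mxprod map_mask; congr (_ *: _).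
  by apply: mxprod_comm => y /mem_mask; apply: stab_S.2.1; apply: map_f.
have proj_select o (X : MX) : {in mask b S, forall e, signed_gen o e *m X = X} ->
    proj C (ob o j) P *m X = if ob o j + parity o (ksum (mask b S)) == eps then X else 0.
  by move=> fixX; rewrite (proj_eigen _ (pmx_eigen_dependent fixX)) addrA F2_addr_eq0.
split => //.
- move=> o e e_S /=.
  by rewrite mulmxA (proj_comm _ (signed_gen_comm o (comm_SP e e_S))) -mulmxA fixF.
- move=> o /=; rewrite proj_select => [|e /mem_mask]; last exact: fixF.
  case: ifP => [/eqP sat_e F_neq0|_]; last by rewrite eqxx.
  by apply/satisfies_rcons; split; first exact: sound.
- move=> o /satisfies_rcons [/complete [B FBE] sat_e]; exists B.
  rewrite -mulmxA FBE proj_select ?sat_e ?eqxx // => e /mem_mask.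
  exact: signed_gen_code_proj.
Qed.

End DependentMeasurement.

Lemma invariant_commuting P S R F j : invariant S R F ->
  ~ (in_gen (map fst S) (pmx C P) \/ in_gen (map fst S) (- pmx C P)) ->
  (forall e, List.In e S -> ~ anticomm e.1 (pmx C P)) ->
  invariant (rcons S (pmx C P, singl m j)) R (fun o => proj C (ob o j) P *m F o).
Proof.
move=> [stab_S fixF sound complete trace] notin_gen not_anti.
have comm_SP e : e \in S -> e.1 *m pmx C P = pmx C P *m e.1.
  by move=> e_S; apply: (comm_or_anticomm stab_S e_S); apply/not_anti/InP.
split.
- split; last split.
  + move=> e; rewrite mem_rcons inE => /orP [/eqP ->|/stab_S.1] //.
    exact: scaled_pauli_pmx.
  + move=> x y; rewrite map_rcons !mem_rcons !inE.
    move=> /orP [/eqP ->|x_S] /orP [/eqP ->|y_S] //.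
    * by move: y_S => /mapP [e e_S ->]; rewrite comm_SP.
    * by move: x_S => /mapP [e e_S ->]; rewrite comm_SP.
    * exact: stab_S.2.1.
  + move=> x; rewrite map_rcons mem_rcons inE => /orP [/eqP ->|/stab_S.2.2] //.
    exact: pmx_mul_self.
- move=> o e; rewrite mem_rcons inE => /orP [/eqP ->|e_S] /=.
    by rewrite mulmxA signed_gen_pmx_proj.
  by rewrite mulmxA (proj_comm _ (signed_gen_comm o (comm_SP e e_S))) -mulmxA fixF.
- by move=> o PF_neq0; apply: sound; apply: contra PF_neq0 => /eqP ->; rewrite mulmx0.
- move=> o /complete [B FBE]; exists B.
  by rewrite -mulmxA FBE code_proj_rcons gen_proj_pmx (proj_comm _ (code_proj_comm o comm_SP)).
- move=> o; rewrite code_proj_rcons gen_proj_pmx size_rcons exprS.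
  have trace_P : \tr (pmx C P *m code_proj o S) = 0.
    apply: mxtrace_mul_code_proj; [exact: stab_S.1 | exact: scaled_pauli_pmx |].
    by apply: notin_gen_mul_nonscalar => //; [exact: stab_S.2 | exact: pmx_mul_self].
  rewrite /proj -scalemxAr mxtraceZ mulmxDr mulmx1 mxtraceD -scalemxAr mxtraceZ.
  rewrite mxtrace_mulC trace_P mulr0 addr0 -(trace o).
  by rewrite [_^-1 * _]mulrC -mulrA mulKf // pnatr_eq0.
Qed.

End Invariant.

Section AnticommutingMeasurement.
Variables (C : numClosedFieldType) (n m : nat).
Notation MX := 'M[C]_(2 ^ n).
Notation ent := (entry C n m).

Definition anticomm_update (T : ent) (P : pauli n) (e : ent) : ent :=
  if e.1 *m pmx C P == - (pmx C P *m e.1) then (T.1 *m e.1, symdiff T.2 e.2) else e.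

Variables (P : pauli n) (xs ys : seq ent) (eT : ent).
Local Notation S := (xs ++ eT :: ys).
Local Notation T := eT.1.
Local Notation upd := (anticomm_update eT P).
Hypothesis stab_S : stabilizer_family S.
Hypothesis anti_TP : anticomm T (pmx C P).

Let eT_S : eT \in S. Proof. by rewrite mem_cat mem_head orbT. Qed.
Let comm_T e : e \in S -> T *m e.1 = e.1 *m T.
Proof. exact: stabilizer_family_comm stab_S eT_S. Qed.
Let sq_T : T *m T = 1%:M. Proof. exact: stabilizer_family_sq stab_S eT_S. Qed.
Let sub_S : {subset xs ++ ys <= S}.
Proof. by move=> e; rewrite !mem_cat inE => /orP [->|->]; rewrite ?orbT. Qed.

Lemma anticomm_update_cases e : e \in S ->
  upd e = (T *m e.1, symdiff eT.2 e.2) /\ anticomm e.1 (pmx C P) \/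
  upd e = e /\ e.1 *m pmx C P = pmx C P *m e.1.
Proof.
move=> e_S; rewrite /anticomm_update; case: eqP => [anti_e|not_anti]; [left | right] => //.
by split=> //; apply: (comm_or_anticomm stab_S e_S).
Qed.

Lemma anticomm_update_optmul e : e \in S -> exists k, (upd e).1 = optmul k T e.1.
Proof. by move=> /anticomm_update_cases [[-> _]|[-> _]]; [exists true | exists false]. Qed.

Lemma anticomm_update_comm_pmx e : e \in S ->
  (upd e).1 *m pmx C P = pmx C P *m (upd e).1.
Proof.
move=> /anticomm_update_cases [[-> anti_e]|[-> //]] /=.
by rewrite -mulmxA anti_e mulmxN (mulmxA T) anti_TP mulNmx opprK -mulmxA.
Qed.

Lemma anticomm_update_comm_T e : e \in S -> (upd e).1 *m T = T *m (upd e).1.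
Proof.
move=> e_S; have [[] ->] /= := anticomm_update_optmul e_S; last by rewrite comm_T.
by rewrite -mulmxA -comm_T // mulmxA.
Qed.

Lemma signed_gen_anticomm_update o e (X : MX) : e \in S ->
  signed_gen o eT *m X = X -> signed_gen o e *m X = X -> signed_gen o (upd e) *m X = X.
Proof.
move=> /anticomm_update_cases [[-> _]|[-> _]] // fixT fixe.
by rewrite signed_gen_mul -mulmxA fixe fixT.
Qed.

Lemma stabilizer_family_anticomm_update j :
  stabilizer_family (rcons (map upd (xs ++ ys)) (pmx C P, singl m j)).
Proof.
have updP x : x \in map fst (map upd (xs ++ ys)) -> exists2 e, e \in S & x = (upd e).1.
  by rewrite -map_comp => /mapP [e /sub_S e_S ->]; exists e.
split; last split.
- move=> e; rewrite mem_rcons inE => /orP [/eqP -> | /mapP [f /sub_S f_S ->]].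
    exact: scaled_pauli_pmx.
  have [[] ->] := anticomm_update_optmul f_S; last by apply: stab_S.1.
  by apply: scaled_pauli_mul; apply: stab_S.1.
- move=> x y; rewrite map_rcons !mem_rcons !inE.
  move=> /orP [/eqP ->|/updP [e e_S ->]] /orP [/eqP ->|/updP [f f_S ->]] //;
    rewrite ?anticomm_update_comm_pmx //.
  have [k ->] := anticomm_update_optmul e_S; have [k' ->] := anticomm_update_optmul f_S.
  by apply: optmul_comm; rewrite ?comm_T //; apply: stabilizer_family_comm stab_S e_S f_S.
- move=> x; rewrite map_rcons mem_rcons inE => /orP [/eqP ->|/updP [e e_S ->]].
    exact: pmx_mul_self.
  have [k ->] := anticomm_update_optmul e_S.
  by apply: optmul_sq; rewrite ?comm_T //; apply: stabilizer_family_sq stab_S e_S.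
Qed.

(* Since [T] is in the family, multiplying a generator by [T] does not change
   the code projector. *)
Lemma gen_proj_code_proj_update o (l : seq ent) : {subset l <= S} ->
  gen_proj o eT *m code_proj o (map upd l) = gen_proj o eT *m code_proj o l.
Proof.
elim: l => [|e l IH] //= sub_el.
have e_S : e \in S by apply: sub_el; rewrite mem_head.
have comm_QTe : gen_proj o eT *m gen_proj o e = gen_proj o e *m gen_proj o eT.
  by apply: gen_proj_comm; rewrite (gen_proj_comm o (esym (comm_T e_S))).
have absorb : gen_proj o eT *m gen_proj o (upd e) = gen_proj o eT *m gen_proj o e.
  case: (anticomm_update_cases e_S) => [[-> _]|[-> _]] //.
  by rewrite /gen_proj signed_gen_mul plus_proj_mul_absorb ?signed_gen_sq.
rewrite mulmxA absorb comm_QTe -mulmxA IH => [|f f_l].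
  by rewrite !mulmxA comm_QTe.
by apply: sub_el; rewrite inE f_l orbT.
Qed.

Lemma code_proj_anticomm_update o :
  code_proj o S = gen_proj o eT *m code_proj o (map upd (xs ++ ys)).
Proof.
rewrite gen_proj_code_proj_update //.
by rewrite code_proj_cat_cons // => x x_xs; apply: comm_T; rewrite mem_cat x_xs.
Qed.

Let upd_S e : e \in map upd (xs ++ ys) -> exists2 f, f \in S & e = upd f.
Proof. by move=> /mapP [f /sub_S f_S ->]; exists f. Qed.

Lemma code_proj_update_comm_pmx o :
  pmx C P *m code_proj o (map upd (xs ++ ys)) = code_proj o (map upd (xs ++ ys)) *m pmx C P.
Proof.
apply/esym/code_proj_comm => e /upd_S [f f_S ->].
exact: anticomm_update_comm_pmx.
Qed.

Lemma code_proj_update_comm_T o :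
  signed_gen o eT *m code_proj o (map upd (xs ++ ys)) =
  code_proj o (map upd (xs ++ ys)) *m signed_gen o eT.
Proof.
apply/esym/code_proj_comm => e /upd_S [f f_S ->].
by rewrite /signed_gen -scalemxAr -scalemxAl anticomm_update_comm_T.
Qed.

Lemma signed_gen_anticomm_pmx o c :
  signed_gen o eT *m (sgnF C c *: pmx C P) = - (sgnF C c *: pmx C P *m signed_gen o eT).
Proof.
rewrite /signed_gen -!scalemxAl -!scalemxAr anti_TP.
by rewrite !scalerN !scalerA mulrC.
Qed.

End AnticommutingMeasurement.

Lemma invariant_anticommuting (C : numClosedFieldType) n m (P : pauli n)
    (xs ys : seq (entry C n m)) eT R F j :
  invariant (xs ++ eT :: ys) R F -> anticomm eT.1 (pmx C P) ->
  invariant (rcons (map (anticomm_update eT P) (xs ++ ys)) (pmx C P, singl m j)) R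
    (fun o => proj C (ob o j) P *m F o).
Proof.
move=> [stab_S fixF sound complete trace] anti_TP.
have eT_S : eT \in xs ++ eT :: ys by rewrite mem_cat mem_head orbT.
set Pi := fun o => code_proj o (map (anticomm_update eT P) (xs ++ ys)).
have comm_projPi o : Pi o *m proj C (ob o j) P = proj C (ob o j) P *m Pi o.
  exact/proj_comm/esym/(code_proj_update_comm_pmx stab_S anti_TP).
have sq_sP (o : 'rV['F_2]_m) : sgnF C (ob o j) *: pmx C P *m (sgnF C (ob o j) *: pmx C P) = 1%:M.
  exact: signed_pmx_sq.
split.
- exact: stabilizer_family_anticomm_update.
- have sub_S : {subset xs ++ ys <= xs ++ eT :: ys}.
    by move=> e; rewrite !mem_cat inE => /orP [->|->]; rewrite ?orbT.
  move=> o e; rewrite mem_rcons inE => /orP [/eqP ->|/mapP [f /sub_S f_S ->]] /=.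
    by rewrite mulmxA signed_gen_pmx_proj.
  have comm_fP := anticomm_update_comm_pmx stab_S anti_TP f_S.
  rewrite mulmxA (proj_comm _ (signed_gen_comm o comm_fP)) -mulmxA.
  by rewrite (signed_gen_anticomm_update P stab_S) ?fixF.
- by move=> o PF_neq0; apply: sound; apply: contra PF_neq0 => /eqP ->; rewrite mulmx0.
- move=> o /complete [B FBE]; exists (B *m (2%:R *: proj C (ob o j) P)).
  rewrite code_proj_rcons gen_proj_pmx mulmxA -(mulmxA _ (F o)) FBE.
  rewrite (code_proj_anticomm_update P stab_S) -scalemxAr mulmxA -(mulmxA _ (Pi o)).
  rewrite comm_projPi mulmxA (plus_proj_anticomm_sandwich _ (sq_sP o)).
    by rewrite -scalemxAl scalerA mulfV ?pnatr_eq0 // scale1r -comm_projPi.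
  exact: (signed_gen_anticomm_pmx anti_TP).
- move=> o; rewrite code_proj_rcons gen_proj_pmx size_rcons size_map.
  have -> : (size (xs ++ ys)).+1 = size (xs ++ eT :: ys) by rewrite !size_cat /= addnS.
  rewrite -(trace o) (code_proj_anticomm_update P stab_S) mxtrace_mulC.
  have sq_T : signed_gen o eT *m signed_gen o eT = 1%:M.
    exact/signed_gen_sq/(stabilizer_family_sq stab_S eT_S).
  rewrite (mxtrace_plus_proj_mul _ (code_proj_update_comm_T P stab_S o) sq_T); last first.
    by rewrite (signed_gen_anticomm_pmx anti_TP) opprK.
  rewrite /gen_proj (mxtrace_plus_proj_mul (signed_gen_anticomm_pmx anti_TP o (ob o j))) ?sq_sP //.
  by rewrite -scalemxAl -scalemxAr (code_proj_update_comm_pmx stab_S anti_TP).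
Qed.

Section Runs.
Variables (C : numClosedFieldType) (n m : nat).
Notation MX := 'M[C]_(2 ^ n).
Notation ent := (entry C n m).
Notation RV := 'rV['F_2]_m.

Definition op_mx (o : RV) (j : nat) (x : op C n) : MX :=
  match x with Gate U => U | Meas P => proj C (ob o j) P end.

Fixpoint run_mx (o : RV) (j : nat) (c : circuit C n) (M : MX) : MX :=
  match c with
  | [::] => M
  | Gate U :: c' => run_mx o j c' (U *m M)
  | Meas P :: c' => run_mx o j.+1 c' (proj C (ob o j) P *m M)
  end.

Lemma run_aux_mx (o : RV) j c (M : MX) psi :
  run_aux o j c (M *m psi) = run_mx o j c M *m psi.
Proof.
elim: c j M => [|x c IH] j M //=.
by case: x => [U|P]; rewrite mulmxA IH.
Qed.

Lemma valid_circuit_cons (x : op C n) c : valid_circuit (x :: c) ->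
  (forall U, x = Gate U -> clifford U) /\ valid_circuit c.
Proof. by move=> valid_xc; split => [U xE|U U_c]; apply: valid_xc; [left | right]. Qed.

Lemma invariant_step x (S : seq ent) R j S' R' j' F :
  step x (S, R, j) (S', R', j') -> (forall U, x = Gate U -> clifford U) ->
  invariant S R F ->
  j' = (j + is_meas x)%N /\ invariant S' R' (fun o => op_mx o j x *m F o).
Proof.
move=> stepx cliff_x invF.
inversion stepx as [| |? ? ? ? i _ lt_i anti_i|]; subst => /=; rewrite ?addn0 ?addn1.
- by split=> //; apply: invariant_gate => //; apply: cliff_x.
- by split=> //; apply: invariant_dependent.
- split=> //; set d := (1%:M, set0) : ent.
  have SE : S = take i S ++ nth d S i :: drop i.+1 S by rewrite -drop_nth // cat_take_drop.
  rewrite SE in invF; exact: invariant_anticommuting j invF anti_i.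
- by split=> //; apply: invariant_commuting.
Qed.

Lemma invariant_run c (s s' : state C n m) : run_alg c s s' -> valid_circuit c ->
  forall F, invariant s.1.1 s.1.2 F -> invariant s'.1.1 s'.1.2 (fun o => run_mx o s.2 c (F o)).
Proof.
elim=> [//|x c' [[S1 R1] j1] [[S2 R2] j2] s3 stepx _ IH] valid_xc F invF /=.
have [cliff_x valid_c] := valid_circuit_cons valid_xc.
have [jE invF2] := invariant_step stepx cliff_x invF.
have := IH valid_c _ invF2; rewrite /= jE.
by case: x {stepx cliff_x valid_xc jE invF2 IH} => [U|P] /=; rewrite ?addn0 ?addn1.
Qed.

Lemma step_exists x (S : seq ent) R j F : invariant S R F ->
  exists s, step x (S, R, j) s.
Proof.
move=> invF; case: x => [U|P]; first by eexists; apply: step_gate.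
have invol_S := (inv_family invF).2.
have [gen_P|notin_gen] :=
  classic (in_gen (map fst S) (pmx C P) \/ in_gen (map fst S) (- pmx C P)).
  have [eps [b size_b PE]] : exists eps : 'F_2, exists2 b, size b = size S &
      (if eps == 1 then - pmx C P else pmx C P) = mprod (mask b S).
    case: gen_P => /(in_gen_mask invol_S) [b size_b PE]; [exists 0 | exists 1]; exists b;
      by rewrite -?(size_map fst) // mprod_mxprod map_mask -PE.
  by eexists; apply: step_dep PE.
pose anti (e : ent) := e.1 *m pmx C P == - (pmx C P *m e.1).
have [has_anti|no_anti] := boolP (has anti S).
  by eexists; apply: (@step_anti _ _ _ P S R j (find anti S)); rewrite // -?has_find //;
    apply/eqP/(nth_find _ has_anti).
eexists; apply: step_free => // e /InP e_S.
by move: no_anti => /hasPn /(_ e e_S) /eqP.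
Qed.

Lemma run_exists c : valid_circuit c -> forall (S : seq ent) R j F, invariant S R F ->
  exists S' R' j', run_alg c (S, R, j) (S', R', j').
Proof.
elim: c => [|x c IH] valid_xc S R j F invF; first by exists S, R, j; apply: run_nil.
have [cliff_x valid_c] := valid_circuit_cons valid_xc.
have [[[S2 R2] j2] stepx] := step_exists x j invF.
have [_ invF2] := invariant_step stepx cliff_x invF.
have [S' [R' [j' run_c]]] := IH valid_c _ _ j2 _ invF2.
by exists S', R', j'; apply: run_cons run_c.
Qed.

End Runs.

Section Outcomes.
Variables (C : numClosedFieldType) (n m : nat).
Notation MX := 'M[C]_(2 ^ n).
Notation RV := 'rV['F_2]_m.

Definition set_bit (o : RV) (j : nat) (b : 'F_2) : RV :=
  \row_k (if val k == j then b else o 0 k).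

Lemma ob_set_bit o j b : (j < m)%N -> ob (set_bit o j b) j = b.
Proof.
move=> lt_jm; rewrite /ob; case: insubP => [k _ kE|]; last by rewrite lt_jm.
by rewrite mxE kE eqxx.
Qed.

Lemma ob_set_bit_neq o j b k : k != j -> ob (set_bit o j b) k = ob o k.
Proof.
by move=> neq_kj; rewrite /ob; case: insubP => [k' _ k'E|] //; rewrite mxE k'E (negbTE neq_kj).
Qed.

(* Outcomes are fixed greedily, measurement by measurement: the two outcome
   projectors of a measurement sum to the identity, so one of them keeps the
   operator nonzero. *)
Lemma run_mx_neq0 c : valid_circuit c -> forall j (F : RV -> MX),
  (j + nmeas c <= m)%N -> (exists o, F o != 0) ->
  (forall o o', (forall k, (k < j)%N -> ob o k = ob o' k) -> F o = F o') ->
  exists o, run_mx o j c (F o) != 0.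
Proof.
elim: c => [|x c IH] valid_xc j F le_jm [o Fo_neq0] F_prefix /=; first by exists o.
have [cliff_x valid_c] := valid_circuit_cons valid_xc.
case: x cliff_x le_jm valid_xc => [U|P] cliff_x le_jm _.
  have [unit_U _] := clifford_invmx (cliff_x U erefl).
  apply: (IH valid_c j (fun o => U *m F o)) => // [|o1 o2 /F_prefix -> //].
  exists o; apply: contra Fo_neq0 => /eqP UF0.
  by rewrite -[F o]mul1mx -(mulVmx unit_U) -mulmxA UF0 mulmx0.
rewrite /nmeas /= add1n addnS in le_jm.
have lt_jm : (j < m)%N by apply: leq_ltn_trans le_jm; rewrite leq_addr.
apply: (IH valid_c j.+1 (fun o => proj C (ob o j) P *m F o)); first by rewrite addSn.
  pose b : 'F_2 := if proj C 0 P *m F o != 0 then 0 else 1.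
  exists (set_bit o j b); rewrite ob_set_bit // (F_prefix _ o) => [|k lt_kj]; last first.
    by rewrite ob_set_bit_neq // neq_ltn lt_kj.
  rewrite /b; case: ifP => // /negbT; rewrite negbK => /eqP proj0F0.
  by apply: contra Fo_neq0 => /eqP proj1F0; rewrite -(proj_add P (F o)) proj0F0 proj1F0 addr0.
move=> o1 o2 eq_prefix; rewrite (eq_prefix j (ltnSn j)) (F_prefix o1 o2) // => k lt_kj.
by apply: eq_prefix; apply: ltnW.
Qed.

Lemma sqnorm_eq0 (v : 'cV[C]_(2 ^ n)) : sqnorm v = 0 -> v = 0.
Proof.
move=> norm0; apply/matrixP => i k; rewrite (ord1 k) mxE.
have /eqP := psumr_eq0P (fun l _ => exprn_ge0 2 (normr_ge0 (v l 0))) norm0 (i := i) isT.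
by rewrite expf_eq0 /= normr_eq0 => /eqP.
Qed.

Lemma sqnorm_delta (k : 'I_(2 ^ n)) : sqnorm (delta_mx k 0 : 'cV[C]_(2 ^ n)) = 1.
Proof.
rewrite /sqnorm (bigD1 k) //= big1 => [|i neq_ik]; rewrite mxE.
  by rewrite !eqxx /= normr1 expr1n addr0.
by rewrite (negbTE neq_ik) /= normr0 expr0n.
Qed.

End Outcomes.

Lemma possible_run_mx (C : numClosedFieldType) n (c : circuit C n)
  (o : 'rV['F_2]_(nmeas c)) : possible o <-> run_mx o 0 c 1%:M != 0.
Proof.
set M := run_mx o 0 c 1%:M.
have probE psi : prob o psi = sqnorm (M *m psi) by rewrite /prob -run_aux_mx mul1mx.
split => [[psi [_]]|M_neq0].
  apply: contra => /eqP M0; rewrite probE M0 mul0mx /sqnorm big1 // => i _.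
  by rewrite mxE normr0 expr0n.
have /existsP [i /existsP [k Mik_neq0]] : [exists i, exists k, M i k != 0].
  apply: contraNT M_neq0; rewrite negb_exists => /forallP M0.
  apply/eqP/matrixP => i k; rewrite mxE; apply/eqP.
  by move: (M0 i); rewrite negb_exists => /forallP /(_ k); rewrite negbK.
exists (delta_mx k 0); split; first exact: sqnorm_delta.
rewrite probE; apply: contra Mik_neq0 => /eqP /sqnorm_eq0 /matrixP /(_ i 0).
rewrite !mxE (bigD1 k) //= big1 => [|l neq_lk]; last by rewrite mxE (negbTE neq_lk) mulr0.
by rewrite mxE !eqxx mulr1 addr0 => ->.
Qed.

Section AffineEquations.
Variable m : nat.
Notation RV := 'rV['F_2]_m.
Implicit Types (R : seq (equation m)) (u v : RV).

Definition eq_form (e : equation m) v : 'F_2 := ob v e.1.1 + \sum_(k in e.1.2) v 0 k.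

Definition homogeneous_sol R v : bool := all (fun e => eq_form e v == 0) R.

Definition homogeneous_space R : {vspace RV} :=
  <<[seq v <- enum [set: RV] | homogeneous_sol R v]>>%VS.

Lemma ob_linear (a : 'F_2) u v j : ob (a *: u + v) j = a * ob u j + ob v j.
Proof. by rewrite /ob; case: insubP => [k _ _|_]; rewrite ?mxE ?mulr0 ?addr0. Qed.

Lemma eq_form_linear e (a : 'F_2) u v : eq_form e (a *: u + v) = a * eq_form e u + eq_form e v.
Proof.
rewrite /eq_form ob_linear mulrDr addrACA mulr_sumr -big_split /=.
by congr (_ + _); apply: eq_bigr => k _; rewrite !mxE.
Qed.

Lemma eq_formB e u v : eq_form e (u - v) = eq_form e u - eq_form e v.
Proof. by rewrite addrC -scaleN1r eq_form_linear mulN1r addrC. Qed.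

Lemma eq_form0 e : eq_form e 0 = 0.
Proof. by have := eq_formB e 0 0; rewrite !subrr. Qed.

Lemma satisfies_homogeneous R a o : satisfies R a ->
  satisfies R o <-> homogeneous_sol R (o - a).
Proof.
move=> sat_a; split => [sat_o|/allP hom e e_R].
  by apply/allP => e e_R; rewrite eq_formB /eq_form sat_o // sat_a // subrr.
by have := hom e e_R; rewrite eq_formB /eq_form sat_a // subr_eq0 => /eqP.
Qed.

Lemma mem_homogeneous_space R v : (v \in homogeneous_space R) = homogeneous_sol R v.
Proof.
apply/idP/idP => [|hom_v]; last first.
  by apply: memv_span; rewrite mem_filter hom_v mem_enum in_setT.
set X := [seq v <- enum [set: RV] | homogeneous_sol R v].
move=> /(coord_span (X := in_tuple X)) ->.
apply: (big_ind (homogeneous_sol R)).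
- by apply/allP => e _; rewrite eq_form0.
- move=> x y /allP hom_x /allP hom_y; apply/allP => e e_R.
  by rewrite -[x]scale1r eq_form_linear (eqP (hom_x e e_R)) (eqP (hom_y e e_R)) mulr0 addr0.
- move=> i _; apply/allP => e e_R.
  have : X`_i \in X by apply: mem_nth.
  rewrite mem_filter => /andP [/allP /(_ e e_R) /eqP hom_Xi _].
  by rewrite -[_ *: _]addr0 eq_form_linear eq_form0 hom_Xi mulr0 addr0.
Qed.

End AffineEquations.

Theorem mainTheorem1 (C : numClosedFieldType) (n : nat) (c : circuit C n)
    (hc : valid_circuit c) :
  (* O(C) is an affine subspace of Z_2^m *)
  (exists (a : 'rV['F_2]_(nmeas c)) (W : {vspace 'rV['F_2]_(nmeas c)}),
      forall o : 'rV['F_2]_(nmeas c), possible o <-> o - a \in W) /\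
  (* the Outcome-Code Algorithm returns a list R ... *)
  (exists R, OCA (m := nmeas c) c R) /\
  (* ... and O(C) is exactly the solution set of any returned R *)
  (forall R, OCA (m := nmeas c) c R ->
     forall o : 'rV['F_2]_(nmeas c), possible o <-> satisfies R o).
Proof.
have OCA_exists : exists R, OCA (m := nmeas c) c R.
  have [S [R [j run_c]]] := run_exists hc 0 (@invariant_nil C n (nmeas c)).
  by exists R, S, j.
have possibleE R : OCA (m := nmeas c) c R ->
    forall o : 'rV['F_2]_(nmeas c), possible o <-> satisfies R o.
  move=> [S [j run_c]] o; rewrite possible_run_mx.
  exact: (invariant_nonzero (invariant_run run_c hc (@invariant_nil C n (nmeas c)))).
split; last by split.
have [R OCA_R] := OCA_exists.
have [a run_a_neq0] : exists a : 'rV['F_2]_(nmeas c), run_mx a 0 c 1%:M != 0.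
  apply: (run_mx_neq0 hc) => //; exists 0; apply/eqP => /(congr1 mxtrace).
  by rewrite mxtrace1 mxtrace0 => /eqP; rewrite pnatr_eq0 expn_eq0.
exists a, (homogeneous_space R) => o.
rewrite mem_homogeneous_space -satisfies_homogeneous; first exact: possibleE.
exact/(possibleE R OCA_R)/possible_run_mx.
Qed.
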